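(* Let $\Psi=(\psi_k)_{k\in\mathbb N}$ with $\psi_k\in(-\pi/2,\pi/2)$, and let $F_n=i\tan(\psi_{|n|})$ for $n\in\mathbb Z$. For $d\ge0$ let $G_d$ be the $SU(2)$ nonlinear Fourier series of the finitely supported sequence $(F_n\mathbf 1_{\{-d\le n\le d\}})_{n\in\mathbb Z}$. For $x\in[0,1]$ let $\theta$ be the unique number in $[0,\pi/2]$ with $\cos\theta=x$ and set $z=e^{2i\theta}$. Then for every $d\ge0$, $$M\,U_d(\Psi,x)\,M=\begin{pmatrix}e^{id\theta}&0\\0&e^{-id\theta}\end{pmatrix}G_d(z)\begin{pmatrix}e^{id\theta}&0\\0&e^{-id\theta}\end{pmatrix}.$$
   Context: $W(x)=\begin{pmatrix}x& i\sqrt{1-x^2}\\ i\sqrt{1-x^2}& x\end{pmatrix}$, $Z=\begin{pmatrix}1&0\\0&-1\end{pmatrix}$, $M=2^{-1/2}\begin{pmatrix}1&1\\1&-1\end{pmatrix}$. $U_0(\Psi,x)=e^{i\psi_0Z}$ and $U_d(\Psi,x)=e^{i\psi_dZ}W(x)U_{d-1}(\Psi,x)W(x)e^{i\psi_dZ}$ for $d\ge1$. For a finitely supported sequence $F:\mathbb Z\to\mathbb C$, its $SU(2)$ nonlinear Fourier series is the matrix-valued function $G(z)=\prod_{k}(1+|F_k|^2)^{-1/2}\begin{pmatrix}1&F_kz^k\\-\overline{F_k}z^{-k}&1\end{pmatrix}$, where the (finite) product is ordered with $k$ increasing from left to right. *)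

From HB Require Import structures.
From mathcomp Require Import all_boot all_order all_algebra.
From mathcomp Require Import all_classical all_reals all_analysis.
From mathcomp Require Import complex.
Set Implicit Arguments. Unset Strict Implicit. Unset Printing Implicit Defensive.
Import Order.TTheory GRing.Theory Num.Theory.
Local Open Scope ring_scope.
Local Open Scope complex_scope.

Section QSP.
Variable R : realType.

Definition expi (t : R) : R[i] := (cos t +i* sin t).

Definition expZ (t : R) : 'M[R[i]]_2 :=
  \matrix_(r < 2, c < 2)
    if r == c then (if r == 0 then expi t else expi (- t)) else 0.

Definition Wmx (x : R) : 'M[R[i]]_2 :=
  \matrix_(r < 2, c < 2)
    if r == c then x%:C else (0 +i* 1) * (Num.sqrt (1 - x ^+ 2))%:C.

Definition Mmx : 'M[R[i]]_2 :=
  \matrix_(r < 2, c < 2)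
    (((Num.sqrt 2)^-1)%:C * (if (r == 1) && (c == 1) then -1 else 1)).

Fixpoint Uqsp (Psi : nat -> R) (x : R) (d : nat) : 'M[R[i]]_2 :=
  match d with
  | 0 => expZ (Psi 0%N)
  | d'.+1 => expZ (Psi d) *m Wmx x *m Uqsp Psi x d' *m Wmx x *m expZ (Psi d)
  end.

Definition nlft_factor (Fk z : R[i]) (k : int) : 'M[R[i]]_2 :=
  ((Num.sqrt (1 + Normc.normc Fk ^+ 2))^-1)%:C *:
  \matrix_(r < 2, c < 2)
    if r == c then 1
    else if r == 0 then Fk * z ^ k else - (conjc Fk) * z ^ (- k).

(* SU(2) nonlinear Fourier series at z of a sequence F supported in
   [lo, lo + n - 1]: ordered product, k increasing from left to right. *)
Definition nlft (F : int -> R[i]) (lo : int) (n : nat) (z : R[i]) : 'M[R[i]]_2 :=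
  \prod_(i < n) nlft_factor (F (lo + i%:Z)%R) z (lo + i%:Z)%R.

End QSP.

(* Conjugation by the Hadamard matrix M exchanges e^{itZ} and e^{itX}, and
   W(cos theta) = e^{i theta X}; hence M U_d M is the palindromic product
   e^{i psi_d X} e^{i theta Z} ... e^{i psi_0 X} ... e^{i theta Z} e^{i psi_d X}.
   With F_k = i tan psi and z = e^{2 i theta}, the normalized k-th factor of the
   nonlinear Fourier series is e^{i k theta Z} e^{i psi_{|k|} X} e^{-i k theta Z},
   so in e^{i d theta Z} G_d e^{i d theta Z} the Z-rotations between consecutive
   factors collapse to e^{i theta Z}; peeling off the factors k = -d and k = d
   gives the induction on d. *)

From HB Require Import structures.
From mathcomp Require Import all_boot all_order all_algebra.
From mathcomp Require Import all_classical all_reals all_analysis.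
From mathcomp Require Import complex.
From mathcomp Require Import ring lra zify.
Set Implicit Arguments. Unset Strict Implicit. Unset Printing Implicit Defensive.
Import Order.TTheory GRing.Theory Num.Theory.
Local Open Scope ring_scope.
Local Open Scope complex_scope.

Section Matrix2.
Variable T : pzRingType.

Definition mx2 (a b c d : T) : 'M[T]_2 :=
  \matrix_(r < 2, s < 2)
    if r == 0 then (if s == 0 then a else b) else (if s == 0 then c else d).

Lemma mx2_eta (A : 'M[T]_2) : A = mx2 (A 0 0) (A 0 1) (A 1 0) (A 1 1).
Proof.
apply/matrixP => i j; rewrite mxE.
by case: i => [[|[|//]] ?]; case: j => [[|[|//]] ?] /=; congr (A _ _); apply: val_inj.
Qed.

Lemma mul_mx2 a b c d a' b' c' d' :
  mx2 a b c d *m mx2 a' b' c' d' =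
  mx2 (a * a' + b * c') (a * b' + b * d') (c * a' + d * c') (c * b' + d * d').
Proof.
apply/matrixP => i j; rewrite !mxE !big_ord_recl big_ord0 addr0 !mxE /=.
by case: i => [[|[|//]] ?]; case: j => [[|[|//]] ?].
Qed.

Lemma mx2_1 : 1%:M = mx2 1 0 0 1.
Proof. by rewrite [LHS]mx2_eta !mxE. Qed.

Lemma scale_mx2 k a b c d : k *: mx2 a b c d = mx2 (k * a) (k * b) (k * c) (k * d).
Proof. by apply/matrixP => i j; rewrite !mxE; case: ifP; case: ifP. Qed.

End Matrix2.

Section Rotations.
Variable R : realType.
Local Notation C := R[i].

Ltac complex_eq := apply/eqP; rewrite eq_complex /=; apply/andP; split; apply/eqP.

Lemma expiD (a b : R) : expi a * expi b = expi (a + b).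
Proof. by complex_eq; rewrite ?cosD ?sinD; ring. Qed.

Lemma expi0 : expi 0 = 1 :> C.
Proof. by rewrite /expi cos0 sin0. Qed.

Lemma expi_neq0 (t : R) : expi t != 0.
Proof.
apply/eqP => expi_t0; move: (expiD t (- t)).
by rewrite expi_t0 mul0r subrr expi0 => /eqP; rewrite eq_sym oner_eq0.
Qed.

Lemma expiN (t : R) : expi (- t) = (expi t)^-1.
Proof. by apply: (mulfI (expi_neq0 t)); rewrite expiD subrr expi0 mulfV ?expi_neq0. Qed.

Lemma expi_exprz (t : R) (k : int) : expi t ^ k = expi (k%:~R * t).
Proof.
have expiXn n : expi t ^+ n = expi (n%:R * t).
  elim: n => [|n IH]; first by rewrite expr0 mul0r expi0.
  by rewrite exprS IH expiD mulrSr mulrDl mul1r addrC.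
case: k => n; first by rewrite -exprnP expiXn.
by rewrite NegzE -exprnN expiXn -expiN mulrNz mulNr.
Qed.

Lemma expZ_mx2 (t : R) : expZ t = mx2 (expi t) 0 0 (expi (- t)).
Proof. by rewrite [LHS]mx2_eta !mxE. Qed.

Lemma expZD (a b : R) : expZ a *m expZ b = expZ (a + b).
Proof. by rewrite !expZ_mx2 mul_mx2 !mul0r !mulr0 !addr0 !add0r !expiD opprD. Qed.

Lemma expZ0 : expZ (0 : R) = 1%:M.
Proof. by rewrite expZ_mx2 oppr0 expi0 mx2_1. Qed.

Definition expX (t : R) : 'M[C]_2 :=
  mx2 (cos t)%:C ('i * (sin t)%:C) ('i * (sin t)%:C) (cos t)%:C.

Lemma Mmx_mx2 :
  Mmx R = mx2 (Num.sqrt 2)^-1%:C (Num.sqrt 2)^-1%:C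
              (Num.sqrt 2)^-1%:C (- (Num.sqrt 2)^-1%:C).
Proof. by rewrite [LHS]mx2_eta !mxE /= mulr1 mulrN1. Qed.

Lemma Mmx_conj_mx2 a b c d : Mmx R *m mx2 a b c d *m Mmx R =
  2^-1%:C *: mx2 (a + b + c + d) (a - b + c - d) (a + b - c - d) (a - b - c + d).
Proof.
have inv_sqrt2_sq : (Num.sqrt 2)^-1%:C * (Num.sqrt 2)^-1%:C = 2^-1%:C :> C.
  by rewrite -rmorphM -invfM -expr2 sqr_sqrtr.
rewrite Mmx_mx2 !mul_mx2; apply/matrixP => i j; rewrite !mxE.
by case: ifP => _; case: ifP => _; rewrite -inv_sqrt2_sq; ring.
Qed.

Lemma Mmx_invol : Mmx R *m Mmx R = 1%:M.
Proof.
rewrite -[X in X *m _]mulmx1 mx2_1 Mmx_conj_mx2 scale_mx2.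
by congr mx2; complex_eq; field.
Qed.

Lemma Mmx_conj_mul (A B : 'M[C]_2) :
  Mmx R *m (A *m B) *m Mmx R = (Mmx R *m A *m Mmx R) *m (Mmx R *m B *m Mmx R).
Proof. by rewrite !mulmxA -[_ *m Mmx R *m Mmx R]mulmxA Mmx_invol mulmx1. Qed.

Lemma Mmx_conj_expZ (t : R) : Mmx R *m expZ t *m Mmx R = expX t.
Proof.
rewrite expZ_mx2 Mmx_conj_mx2 scale_mx2.
by congr mx2; complex_eq; rewrite ?cosN ?sinN; field.
Qed.

Lemma Mmx_conj_expX (t : R) : Mmx R *m expX t *m Mmx R = expZ t.
Proof.
by rewrite -Mmx_conj_expZ !mulmxA Mmx_invol mul1mx -mulmxA Mmx_invol mulmx1.
Qed.

Lemma Wmx_cos (theta : R) : 0 <= theta <= pi -> Wmx (cos theta) = expX theta.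
Proof.
move=> theta_0pi; have sin_ge0 : 0 <= sin theta by rewrite sin_ge0_pi.
by rewrite [LHS]mx2_eta !mxE /= -sin2cos2 sqrtr_sqr ger0_norm.
Qed.

Lemma inv_sqrt_1_normc_tan2 (p : R) : 0 < cos p ->
  (Num.sqrt (1 + Normc.normc ('i * (tan p)%:C) ^+ 2))^-1 = cos p.
Proof.
move=> cos_gt0; have cos_neq0 : cos p != 0 by rewrite gt_eqF.
have -> : Normc.normc ('i * (tan p)%:C) ^+ 2 = tan p ^+ 2.
  by rewrite /= sqr_sqrtr ?addr_ge0 ?sqr_ge0 //; ring.
by rewrite -cos2_tan2 // -exprVn sqrtr_sqr ger0_norm ?invrK // invr_ge0 ltW.
Qed.

Lemma nlft_factor_tan (p theta : R) (k : int) : 0 < cos p ->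
  nlft_factor ('i * (tan p)%:C) (expi (2 * theta)) k =
  expZ (k%:~R * theta) *m expX p *m expZ (- (k%:~R * theta)).
Proof.
move=> cos_gt0; set u := expi (k%:~R * theta).
have u_neq0 : u != 0 by rewrite -invr_eq0 -expiN expi_neq0.
have cos_tan : (cos p)%:C * (tan p)%:C = (sin p)%:C :> C.
  by rewrite -rmorphM mulrC divfK ?gt_eqF.
have conj_F : conjc ('i * (tan p)%:C) = - ('i * (tan p)%:C).
  by complex_eq; ring.
have z_k : expi (2 * theta) ^ k = u * u by rewrite expi_exprz expiD; congr expi; ring.
have z_Nk : expi (2 * theta) ^ (- k) = u^-1 * u^-1.
  by rewrite expi_exprz -!expiN expiD mulrNz; congr expi; ring.
rewrite [LHS]mx2_eta !mxE conj_F z_k z_Nk /= inv_sqrt_1_normc_tan2 //.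
by rewrite !expZ_mx2 !opprK expiN -/u !mul_mx2 /expX -cos_tan; congr mx2; field.
Qed.

End Rotations.

Section NonlinearFourierSeries.
Variable R : realType.

Lemma eq_nlft (F G : int -> R[i]) (lo : int) (n : nat) (z : R[i]) :
  (forall i : 'I_n, F (lo + i%:Z) = G (lo + i%:Z)) -> nlft F lo n z = nlft G lo n z.
Proof. by move=> eqFG; apply: eq_bigr => i _; rewrite eqFG. Qed.

Lemma nlft_centered0 (F : int -> R[i]) (z : R[i]) :
  nlft F (- 0%:Z) 1 z = nlft_factor (F 0) z 0.
Proof. by rewrite /nlft big_ord1. Qed.

Lemma nlft_centeredS (F : int -> R[i]) (z : R[i]) (n : nat) :
  nlft F (- n.+1%:Z) n.+1.*2.+1 z =
  nlft_factor (F (- n.+1%:Z)) z (- n.+1%:Z) * nlft F (- n%:Z) n.*2.+1 z *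
  nlft_factor (F n.+1) z n.+1.
Proof.
rewrite /nlft doubleS big_ord_recl big_ord_recr /= mulrA addr0.
congr (_ * _ * nlft_factor (F _) z _); try (rewrite /bump /=; lia).
by apply: eq_bigr => i _; congr (nlft_factor (F _) z _); rewrite /bump /=; lia.
Qed.

End NonlinearFourierSeries.

Section QuantumSignalProcessing.
Variables (R : realType) (Psi : nat -> R) (x theta : R).
Hypothesis cos_Psi_gt0 : forall k, 0 < cos (Psi k).
Hypothesis theta_0pi : 0 <= theta <= pi.
Hypothesis cos_theta : cos theta = x.

Let F (n : int) : R[i] := 'i * (tan (Psi `|n|%N))%:C.
Let z : R[i] := expi (2 * theta).

Lemma Mmx_conj_Uqsp (d : nat) :
  Mmx R *m Uqsp Psi x d *m Mmx R =
  expZ (d%:R * theta) *m nlft F (- d%:Z) d.*2.+1 z *m expZ (d%:R * theta).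
Proof.
have factor k : nlft_factor (F k) z k =
    expZ (k%:~R * theta) *m expX (Psi `|k|%N) *m expZ (- (k%:~R * theta)).
  exact: nlft_factor_tan.
elim: d => [|n IH].
  by rewrite nlft_centered0 factor /= !mul0r oppr0 expZ0 !mul1mx !mulmx1 Mmx_conj_expZ.
set a := n.+1%:R * theta; set P := expX (Psi n.+1).
have a_split : a = theta + n%:R * theta by rewrite /a mulrSr mulrDl mul1r addrC.
have factor_left : expZ a *m nlft_factor (F (- n.+1%:Z)) z (- n.+1%:Z) =
    P *m expZ theta *m expZ (n%:R * theta).
  rewrite factor abszN mulrNz mulNr opprK pmulrn !mulmxA expZD subrr expZ0 mul1mx.
  by rewrite -mulmxA expZD -a_split.
have factor_right : nlft_factor (F n.+1) z n.+1 *m expZ a =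
    expZ (n%:R * theta) *m expZ theta *m P.
  by rewrite factor pmulrn -!mulmxA expZD addNr expZ0 mulmx1 mulmxA expZD addrC -a_split.
have Wmx_x : Wmx x = expX theta by rewrite -cos_theta Wmx_cos.
rewrite /= !Mmx_conj_mul !Mmx_conj_expZ Wmx_x Mmx_conj_expX IH.
rewrite nlft_centeredS -!mulmxE !mulmxA factor_left -!mulmxA factor_right.
by rewrite !mulmxA.
Qed.

End QuantumSignalProcessing.

Theorem lemma4p1 (R : realType) (Psi : nat -> R)
    (hPsi : forall k : nat, - (pi / 2) < Psi k < pi / 2)
    (x theta : R) (hx : 0 <= x <= 1)
    (htheta : 0 <= theta <= pi / 2) (hcos : cos theta = x) (d : nat) :
  let F : int -> R[i] := fun n => (0 +i* 1) * (tan (Psi `|n|%N))%:C in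
  let Fd : int -> R[i] :=
    fun n => if (- (d%:Z) <= n) && (n <= d%:Z) then F n else 0 in
  let z : R[i] := expi (2 * theta) in
  Mmx R *m Uqsp Psi x d *m Mmx R =
  expZ (d%:R * theta) *m nlft Fd (- (d%:Z)) (d.*2.+1) z *m expZ (d%:R * theta).
Proof.
move=> F Fd z.
have cos_Psi_gt0 k : 0 < cos (Psi k) by apply: cos_gt0_pihalf.
have theta_0pi : 0 <= theta <= pi by have := pi_ge0 R; move: htheta; lra.
have Fd_window (i : 'I_d.*2.+1) : Fd (- d%:Z + i%:Z) = F (- d%:Z + i%:Z).
  by rewrite /Fd ifT //; have := ltn_ord i; lia.
by rewrite (eq_nlft z Fd_window) (Mmx_conj_Uqsp cos_Psi_gt0 theta_0pi hcos).
Qed.
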